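(* Let $A>0$ and let $\tilde n,\tilde m$ be probability measures on $\mathbb R$ with finite second moment such that $\int y\,\tilde n(dy)=\int y\,\tilde m(dy)$. Then \[W_2\big(T(\tilde n),T(\tilde m)\big)\leq\frac{1}{\sqrt2}\,W_2(\tilde n,\tilde m).\]
   Context: $\Gamma_{A/2}(y):=\frac{1}{\sqrt{2\pi A}}e^{-|y|^2/A}$ (Gaussian density of variance $A/2$). For a probability measure $\tilde n$ on $\mathbb R$ with finite second moment, $T(\tilde n)$ is the probability density \[T(\tilde n)(y):=\int\!\!\int\Gamma_{A/2}\Big(y-\frac{y_*+y_*'}{2}\Big)\,\tilde n(dy_* )\,\tilde n(dy_*').\] $W_2$ is the quadratic Wasserstein distance: $W_2(\mu,\nu)^2=\inf_\pi\int|x-y|^2\,d\pi(x,y)$, infimum over probability measures $\pi$ on $\mathbb R^2$ with marginals $\mu$ and $\nu$. *)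

From HB Require Import structures.
From mathcomp Require Import all_boot all_order all_algebra.
From mathcomp Require Import all_classical all_reals all_analysis.
Set Implicit Arguments. Unset Strict Implicit. Unset Printing Implicit Defensive.
Import Order.TTheory GRing.Theory Num.Theory.
Import numFieldNormedType.Exports.
Local Open Scope classical_set_scope.
Local Open Scope ring_scope.

(* Gaussian density of variance A/2 (normalized):
   Gamma_{A/2}(y) = (pi A)^{-1/2} exp(-y^2/A). *)
Definition Gauss {R : realType} (A : R) (y : R) : R :=
  (Num.sqrt (pi * A))^-1 * expR (- (y ^+ 2) / A).

Definition Tdens {R : realType} (A : R) (n : probability R R) (y : R) : \bar R :=
  (\int[n \x n]_(z in setT) (Gauss A (y - (z.1 + z.2) / 2))%:E)%E.

Definition Tmeas {R : realType} (A : R) (n : probability R R) : set R -> \bar R :=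
  fun B => (\int[lebesgue_measure]_(y in B) Tdens A n y)%E.

Definition coupling {R : realType} (mu nu : set R -> \bar R)
    (p : probability (R * R)%type R) : Prop :=
  (forall B : set R, measurable B -> p (B `*` setT) = mu B) /\
  (forall B : set R, measurable B -> p (setT `*` B) = nu B).

Definition W2sq {R : realType} (mu nu : set R -> \bar R) : \bar R :=
  ereal_inf [set (\int[p]_(z in setT) (((z.1 - z.2) ^+ 2)%:E))%E
            | p in [set p | coupling mu nu p]].

Definition W2 {R : realType} (mu nu : set R -> \bar R) : \bar R :=
  match W2sq mu nu with
  | r%:E => (Num.sqrt r)%:E
  | +oo%E => +oo%E
  | -oo%E => -oo%E
  end.

(* Let p be a coupling of n and m, draw (X1, Y1) and (X2, Y2) independently from p
   and an independent Z ~ N(0, A/2).  Then ((X1 + X2)/2 + Z, (Y1 + Y2)/2 + Z) is a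
   coupling of T(n) and T(m).  The noise is shared, so its cost is E[((D1 + D2)/2)^2]
   with D_i = X_i - Y_i; since D1 and D2 are independent copies of a centred variable
   (n and m have the same mean), this is E[D1^2]/2, half the cost of p.  Taking the
   infimum over p gives W2(T(n), T(m))^2 <= W2(n, m)^2 / 2. *)

From HB Require Import structures.
From mathcomp Require Import all_boot all_order all_algebra.
From mathcomp Require Import all_classical all_reals all_analysis.
From mathcomp Require Import measurable_realfun ring lra.
Import Order.TTheory GRing.Theory Num.Theory.
Import numFieldNormedType.Exports.
Local Open Scope classical_set_scope.
Local Open Scope ring_scope.
Set Implicit Arguments. Unset Strict Implicit. Unset Printing Implicit Defensive.

Section lebesgue_translation.
Context {R : realType}.
Local Notation mu := (@lebesgue_measure R).

Lemma lebesgue_measure_shift (c : R) (B : set R) : measurable B ->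
  pushforward mu ((fun t => t + c) : measurableTypeR R -> measurableTypeR R) B = mu B.
Proof.
move=> mB; apply/esym/lebesgue_measure_unique => //; first exact: measurable_funD.
move=> mf _ [[a b]] _ <-.
change (mu `]a, b] = mu ((fun t => t + c) @^-1` `]a, b])).
have -> : (fun t => t + c) @^-1` `]a, b] = `]a - c, b - c]%classic :> set R.
  by apply/seteqP; split => x /=; rewrite !in_itv /= => /andP[? ?];
    apply/andP; split; lra.
rewrite !lebesgue_measure_itv/= !lte_fin.
have -> : (a - c < b - c) = (a < b) by apply/idP/idP; lra.
by case: ifP => // _; rewrite -!EFinD; congr EFin; lra.
Qed.

Lemma ge0_integral_shift (c : R) (B : set R) (f : R -> \bar R) :
  measurable B -> measurable_fun setT f -> (forall y, (0 <= f y)%E) ->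
  (\int[mu]_(t in (fun t => t + c)%R @^-1` B) f (t + c)%R = \int[mu]_(y in B) f y)%E.
Proof.
move=> mB mf f0.
have mshift : measurable_fun setT
    ((fun t => t + c) : measurableTypeR R -> measurableTypeR R).
  exact: measurable_funD.
apply/esym; rewrite -(ge0_integral_pushforward mshift) //; last exact: measurable_funTS.
by apply: eq_measure_integral => D mD _; exact/esym/lebesgue_measure_shift.
Qed.

End lebesgue_translation.

Section law_transfer.
Context d (T : measurableType d) (R : realType).
Variables (P : probability T R) (n : probability R R) (X : T -> R).
Hypothesis mX : measurable_fun setT X.
Hypothesis lawX : forall B, measurable B -> P (X @^-1` B) = n B.

Lemma ge0_integral_law (phi : R -> \bar R) :
  measurable_fun setT phi -> (forall y, (0 <= phi y)%E) ->
  (\int[P]_x phi (X x) = \int[n]_y phi y)%E.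
Proof.
move=> mphi phi0.
have := ge0_integral_pushforward mX P measurableT mphi (fun y _ => phi0 y).
rewrite preimage_setT => <-.
by apply: eq_measure_integral => B mB _; exact: lawX.
Qed.

Lemma integrable_law (phi : R -> \bar R) : measurable_fun setT phi ->
  n.-integrable setT phi -> P.-integrable setT (phi \o X).
Proof.
move=> mphi /integrableP[_ iphi]; apply/integrableP; split.
  exact: measurableT_comp.
rewrite (ge0_integral_law (phi := fun y => `|phi y|)%E) //.
exact: measurableT_comp.
Qed.

Lemma integral_law (phi : R -> \bar R) : measurable_fun setT phi ->
  n.-integrable setT phi -> (\int[P]_x phi (X x) = \int[n]_y phi y)%E.
Proof.
move=> mphi iphi.
have := integral_pushforward mX mphi (integrable_law mphi iphi) measurableT.
rewrite preimage_setT => <-.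
by apply: eq_measure_integral => B mB _; exact: lawX.
Qed.

Lemma ge0_integral_prod_law (F : R * R -> \bar R) :
  measurable_fun setT F -> (forall z, (0 <= F z)%E) ->
  (\int[P \x P]_x F (X x.1, X x.2) = \int[n \x n]_z F z)%E.
Proof.
move=> mF F0.
have mFX : measurable_fun setT (fun x : T * T => F (X x.1, X x.2)).
  apply: measurableT_comp mF _; apply: measurable_fun_pair.
    exact: measurableT_comp mX measurable_fst.
  exact: measurableT_comp mX measurable_snd.
rewrite (fubini_tonelli1 _ mFX (fun=> F0 _)) (fubini_tonelli1 _ mF F0) /fubini_F /=.
have mF1 u : measurable_fun setT (fun v => F (u, v)).
  exact: measurableT_comp mF (pair1_measurable u).
transitivity (\int[P]_x (fun u => \int[n]_v F (u, v)) (X x))%E.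
  apply: eq_integral => x _ /=.
  exact: (ge0_integral_law (phi := fun v => F (X x, v))).
apply: ge0_integral_law; last by move=> u; exact: integral_ge0.
exact: (measurable_fun_fubini_tonelli_F _ mF F0).
Qed.

End law_transfer.

Lemma integral_cst_probability d (T : measurableType d) (R : realType)
    (P : probability T R) (r : \bar R) :
  (\int[P]_x r = r)%E.
Proof.
(* [integral_cst] produces [P setT] through the measure coercion of [P] *)
have P1 : (P : {measure set T -> \bar R}) setT = 1%E := probability_setT P.
by have := integral_cst P measurableT r; rewrite /= P1 mule1.
Qed.

Lemma ge0_integral_prod_probability d1 d2 (T1 : measurableType d1)
    (T2 : measurableType d2) (R : realType)
    (mu : {sigma_finite_measure set T1 -> \bar R}) (Q : probability T2 R)
    (g : T1 -> \bar R) :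
  measurable_fun setT g -> (forall x, (0 <= g x)%E) ->
  (\int[mu \x Q]_w g w.1 = \int[mu]_x g x)%E.
Proof.
move=> mg g0; rewrite fubini_tonelli1 //; last exact: measurableT_comp.
by apply: eq_integral => x _; rewrite /fubini_F /= integral_cst_probability.
Qed.

Lemma integrable_of_sqr d (T : measurableType d) (R : realType)
    (mu : {finite_measure set T -> \bar R}) (f : T -> R) :
  measurable_fun setT f -> mu.-integrable setT (fun x => (f x ^+ 2)%:E) ->
  mu.-integrable setT (EFin \o f).
Proof.
move=> mf if2.
apply: (@le_integrable _ _ _ mu setT measurableT _ (fun x => (1 + f x ^+ 2)%:E)).
- exact/measurable_EFinP.
- move=> x _; change ((`|f x|)%:E <= (`|1 + f x ^+ 2|)%:E)%E.
  rewrite lee_fin [leRHS]ger0_norm ?addr_ge0 ?sqr_ge0 //.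
  have := real_normK (num_real (f x)); have := normr_ge0 (f x); nra.
- under eq_fun do rewrite EFinD.
  exact: integrableD (finite_measure_integrable_cst _ _ _) if2.
Qed.

Section half_variance.
Context d (T : measurableType d) (R : realType) (P : probability T R) (f : T -> R).
Hypothesis int_f : P.-integrable setT (EFin \o f).
Hypothesis int_f2 : P.-integrable setT (fun x => (f x ^+ 2)%:E).
Hypothesis f_centered : (\int[P]_x (f x)%:E = 0)%E.
Variable C : R.
Hypothesis f2C : (\int[P]_x (f x ^+ 2)%:E = C%:E)%E.

Lemma integral_quadratic (a b c : R) :
  (\int[P]_x (a + b * f x + c * f x ^+ 2)%:E = (a + c * C)%:E)%E.
Proof.
under eq_integral do rewrite !EFinD (EFinM b) (EFinM c).
have ia : P.-integrable setT (fun=> a%:E) by exact: finite_measure_integrable_cst.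
have ib : P.-integrable setT (fun x => (b%:E * (f x)%:E)%E) by exact: integrableZl.
have ic : P.-integrable setT (fun x => (c%:E * (f x ^+ 2)%:E)%E) by exact: integrableZl.
rewrite integralD //; last exact: integrableD.
rewrite integralD // integral_cst_probability.
by rewrite !integralZl // f_centered f2C mule0 adde0 -EFinM -EFinD.
Qed.

Lemma integral_sqr_average :
  (\int[P \x P]_x (((f x.1 + f x.2) / 2) ^+ 2)%:E = (C / 2)%:E)%E.
Proof.
have mf : measurable_fun setT f.
  by move/integrableP: int_f => [/measurable_EFinP].
have mg : measurable_fun setT (fun x : T * T => (((f x.1 + f x.2) / 2) ^+ 2)%:E).
  apply/measurable_EFinP; apply: measurable_funX; apply: measurable_funM => //.
  apply: measurable_funD; [exact: measurableT_comp mf measurable_fst |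
                           exact: measurableT_comp mf measurable_snd].
rewrite (fubini_tonelli1 _ mg) /fubini_F /=; last by move=> x; rewrite lee_fin sqr_ge0.
transitivity (\int[P]_x (C / 4 + 0 * f x + 4^-1 * f x ^+ 2)%:E)%E.
  apply: eq_integral => x _.
  transitivity (\int[P]_y (f x ^+ 2 / 4 + f x / 2 * f y + 4^-1 * f y ^+ 2)%:E)%E.
    by apply: eq_integral => y _; congr EFin; field.
  by rewrite integral_quadratic; congr EFin; field.
by rewrite integral_quadratic; congr EFin; field.
Qed.

End half_variance.

Lemma GaussE (R : realType) (A : R) : 0 < A ->
  Gauss A = normal_pdf 0 (Num.sqrt (A / 2)).
Proof.
move=> A0; apply/funext => y.
have s0 : Num.sqrt (A / 2) != 0 by rewrite gt_eqF // sqrtr_gt0 divr_gt0.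
rewrite normal_pdfE //= /normal_peak /normal_fun /Gauss sqr_sqrtr ?divr_ge0 ?ltW //.
rewrite subr0; congr (_^-1 * expR _); first by congr Num.sqrt; rewrite -mulr_natr; field.
rewrite -mulr_natr; field; lra.
Qed.

Definition gaussian (R : realType) (A : R) : probability (measurableTypeR R) R :=
  normal_prob 0 (Num.sqrt (A / 2)).

Section gauss_kernel.
Context {R : realType} (A : R) (B : set R).
Hypothesis A0 : 0 < A.
Hypothesis mB : measurable B.
Local Notation mu := (@lebesgue_measure R).

Definition gauss_kernel (c : R) : \bar R :=
  (\int[mu]_(y in B) (Gauss A (y - c))%:E)%E.

Let kernel (p : R * measurableTypeR R) : \bar R := (\1_B p.2 * Gauss A (p.2 - p.1))%:E.

Let measurable_kernel : measurable_fun setT kernel.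
Proof.
apply/measurable_EFinP; apply: measurable_funM.
  exact: measurableT_comp (measurable_indic mB) measurable_snd.
rewrite (GaussE A0); apply: measurableT_comp (measurable_normal_pdf _ _) _.
exact: measurable_funB measurable_snd measurable_fst.
Qed.

Let kernel_ge0 p : (0 <= kernel p)%E.
Proof. by rewrite lee_fin mulr_ge0 // (GaussE A0) normal_pdf_ge0. Qed.

Let gauss_kernelE c : gauss_kernel c = (\int[mu]_y kernel (c, y))%E.
Proof.
rewrite /gauss_kernel integral_mkcond; apply: eq_integral => y _.
by rewrite /kernel /patch indicE; case: (y \in B); rewrite ?mul1r ?mul0r.
Qed.

Lemma measurable_gauss_kernel : measurable_fun setT gauss_kernel.
Proof.
rewrite (_ : gauss_kernel = fubini_F mu kernel); last exact/funext/gauss_kernelE.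
exact: measurable_fun_fubini_tonelli_F measurable_kernel kernel_ge0.
Qed.

Lemma gauss_kernel_ge0 c : (0 <= gauss_kernel c)%E.
Proof. by rewrite gauss_kernelE; apply: integral_ge0 => y _; exact: kernel_ge0. Qed.

Lemma gaussian_shift c :
  gaussian A ((fun t => t + c) @^-1` B) = gauss_kernel c.
Proof.
rewrite /gauss_kernel -(ge0_integral_shift c mB); last 2 first.
- apply/measurable_EFinP; rewrite (GaussE A0).
  exact: measurableT_comp (measurable_normal_pdf _ _) (measurable_funB _ _).
- by move=> y; rewrite lee_fin (GaussE A0) normal_pdf_ge0.
by apply: eq_integral => t _; rewrite addrK (GaussE A0).
Qed.

Lemma Tmeas_gauss_kernel (n : probability R R) :
  Tmeas A n B = (\int[n \x n]_z gauss_kernel ((z.1 + z.2) / 2))%E.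
Proof.
rewrite /Tmeas integral_mkcond.
transitivity (\int[mu]_y \int[n \x n]_z kernel ((z.1 + z.2) / 2, y)%R)%E.
  apply: eq_integral => y _; rewrite /patch /Tdens; case: ifP => yB.
    by apply: eq_integral => z _; rewrite /kernel indicE yB mul1r.
  rewrite (eq_integral (cst 0%E)) ?integral0 // => z _.
  by rewrite /kernel indicE yB mul0r.
have mk : measurable_fun setT
    (fun p : measurableTypeR R * (R * R) => kernel ((p.2.1 + p.2.2) / 2, p.1)).
  apply: measurableT_comp measurable_kernel _.
  apply: measurable_fun_pair => //; apply: measurable_funM => //.
  apply: measurable_funD.
    exact: measurableT_comp measurable_fst measurable_snd.
  exact: measurableT_comp measurable_snd measurable_snd.
transitivity (\int[n \x n]_z \int[mu]_y kernel ((z.1 + z.2) / 2, y)%R)%E.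
  (* the cast is what lets Coq find the sigma-finite structure of [n \x n] *)
  exact: (@fubini_tonelli _ _ _ _ R mu ((n \x n)%E : probability _ R) _ mk
    (fun=> kernel_ge0 _)).
by apply: eq_integral => z _; rewrite gauss_kernelE.
Qed.

End gauss_kernel.

Section noisy_average.
Context d (T : measurableType d) (R : realType).

(* two independent samples of [P] and an independent N(0, A/2) noise Z, under which
   [noisy_average X] is (X1 + X2)/2 + Z *)
Definition noise_prob (A : R) (P : probability T R) :=
  ((P \x P) \x gaussian A)%E.

Definition noisy_average (X : T -> R) (w : (T * T) * R) : R :=
  w.2 + (X w.1.1 + X w.1.2) / 2.

Lemma measurable_noisy_average (X : T -> R) : measurable_fun setT X ->
  measurable_fun setT (noisy_average X).
Proof.
move=> mX; apply: measurable_funD; first exact: measurable_snd.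
apply: measurable_funM => //; apply: measurable_funD.
  exact: measurableT_comp mX (measurableT_comp measurable_fst measurable_fst).
exact: measurableT_comp mX (measurableT_comp measurable_snd measurable_fst).
Qed.

Lemma noisy_average_law (A : R) (P : probability T R) (n : probability R R)
    (X : T -> R) (B : set R) :
  0 < A -> measurable_fun setT X ->
  (forall B, measurable B -> P (X @^-1` B) = n B) -> measurable B ->
  noise_prob A P (noisy_average X @^-1` B) = Tmeas A n B.
Proof.
move=> A0 mX lawX mB.
have mk : measurable_fun setT (fun z : R * R => gauss_kernel A B ((z.1 + z.2) / 2)).
  apply: measurableT_comp (measurable_gauss_kernel A0 mB) _.
  by apply: measurable_funM => //; exact: measurable_funD.
rewrite (Tmeas_gauss_kernel A0 mB) -(ge0_integral_prod_law mX lawX mk); last first.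
  by move=> z; exact: gauss_kernel_ge0.
(* [\x] measures a set by integrating the measures of its sections *)
change (\int[P \x P]_x gaussian A (xsection (noisy_average X @^-1` B) x) =
  \int[P \x P]_x gauss_kernel A B ((X x.1 + X x.2) / 2))%E.
apply: eq_integral => x _; rewrite -gaussian_shift //; congr (gaussian A _).
by apply/seteqP; split => t; rewrite /xsection /noisy_average /= inE.
Qed.

End noisy_average.

Section coupling_marginals.
Context {R : realType} (mu nu : set R -> \bar R) (p : probability (R * R)%type R).
Hypothesis p_mu_nu : coupling mu nu p.

Lemma coupling_fst B : measurable B -> p (fst @^-1` B) = mu B.
Proof. by rewrite -setXT; exact: p_mu_nu.1. Qed.

Lemma coupling_snd B : measurable B -> p (snd @^-1` B) = nu B.
Proof. by rewrite -setTX; exact: p_mu_nu.2. Qed.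

End coupling_marginals.

Section T_coupling.
Context {R : realType}.

Definition noisy_average_pair
    (w : (((R * R) * (R * R)) * measurableTypeR R)%type) : (R * R)%type :=
  (noisy_average fst w, noisy_average snd w).

Lemma measurable_noisy_average_pair : measurable_fun setT noisy_average_pair.
Proof.
by apply: measurable_fun_pair; apply: measurable_noisy_average;
  [exact: measurable_fst | exact: measurable_snd].
Qed.

HB.instance Definition _ := isMeasurableFun.Build _ _ _ _
  noisy_average_pair measurable_noisy_average_pair.

Definition T_coupling (A : R) (p : probability (R * R)%type R) :
    probability (R * R)%type R :=
  distribution (noise_prob A p) noisy_average_pair.

Lemma coupling_T_coupling (A : R) (n m : probability R R)
    (p : probability (R * R)%type R) :
  0 < A -> coupling (n : set R -> \bar R) m p ->
  coupling (Tmeas A n) (Tmeas A m) (T_coupling A p).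
Proof.
move=> A0 p_nm; split => B mB.
- rewrite setXT -(noisy_average_law A0 measurable_fst (coupling_fst p_nm) mB).
  by rewrite /T_coupling /distribution /pushforward.
- rewrite setTX -(noisy_average_law A0 measurable_snd (coupling_snd p_nm) mB).
  by rewrite /T_coupling /distribution /pushforward.
Qed.

End T_coupling.

Section coupling_moments.
Context {R : realType} (n m : probability R R) (p : probability (R * R)%type R).
Hypothesis p_nm : coupling (n : set R -> \bar R) m p.
Hypothesis n2 : n.-integrable setT (fun y : R => (y ^+ 2)%:E).
Hypothesis m2 : m.-integrable setT (fun y : R => (y ^+ 2)%:E).
Hypothesis n_m : (\int[n]_(y in setT) y%:E = \int[m]_(y in setT) y%:E)%E.

Let measurable_sqr : measurable_fun setT (fun y : R => (y ^+ 2)%:E).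
Proof. by apply/measurable_EFinP; exact: measurable_funX. Qed.

Lemma integrable_coupling_cost :
  p.-integrable setT (fun z => ((z.1 - z.2) ^+ 2)%:E).
Proof.
have p1 := integrable_law measurable_fst (coupling_fst p_nm) measurable_sqr n2.
have p2 := integrable_law measurable_snd (coupling_snd p_nm) measurable_sqr m2.
apply: (@le_integrable _ _ _ p setT measurableT _
  ((fun z => 2%:E * (z.1 ^+ 2)%:E) \+ (fun z => 2%:E * (z.2 ^+ 2)%:E))%E).
- apply/measurable_EFinP; apply: measurable_funX.
  exact: measurable_funB measurable_fst measurable_snd.
- move=> z _.
  change ((`|(z.1 - z.2) ^+ 2|)%:E <= (`|2 * z.1 ^+ 2 + 2 * z.2 ^+ 2|)%:E)%E.
  have h0 : 0 <= 2 * z.1 ^+ 2 + 2 * z.2 ^+ 2 by rewrite addr_ge0 // mulr_ge0 // sqr_ge0.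
  rewrite lee_fin (ger0_norm h0) ger0_norm ?sqr_ge0 //.
  by have := sqr_ge0 (z.1 + z.2); nra.
- by apply: integrableD => //; exact: integrableZl.
Qed.

Lemma integrable_coupling_diff : p.-integrable setT (EFin \o (fun z => z.1 - z.2)).
Proof.
apply: integrable_of_sqr; last exact: integrable_coupling_cost.
exact: measurable_funB measurable_fst measurable_snd.
Qed.

Lemma coupling_diff_centered : (\int[p]_z (z.1 - z.2)%:E = 0)%E.
Proof.
have mE : measurable_fun setT (EFin \o id : R -> \bar R).
  by apply/measurable_EFinP; exact: measurable_id.
have n1 := @integrable_of_sqr _ _ _ n id (@measurable_id _ _ setT) n2.
have m1 := @integrable_of_sqr _ _ _ m id (@measurable_id _ _ setT) m2.
have p1 := integrable_law measurable_fst (coupling_fst p_nm) mE n1.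
have p2 := integrable_law measurable_snd (coupling_snd p_nm) mE m1.
under eq_integral do rewrite EFinB.
rewrite integralB //.
rewrite (integral_law measurable_fst (coupling_fst p_nm) mE n1).
rewrite (integral_law measurable_snd (coupling_snd p_nm) mE m1).
by rewrite n_m subee // (integrable_fin_num measurableT m1).
Qed.

Lemma T_coupling_cost (A C : R) :
  (\int[p]_z ((z.1 - z.2) ^+ 2)%:E = C%:E)%E ->
  (\int[T_coupling A p]_z ((z.1 - z.2) ^+ 2)%:E = (C / 2)%:E)%E.
Proof.
move=> pC; pose D (z : R * R) := z.1 - z.2.
have mD : measurable_fun setT D.
  exact: measurable_funB measurable_fst measurable_snd.
have mcost : measurable_fun setT (fun z : R * R => (D z ^+ 2)%:E).
  by apply/measurable_EFinP; exact: measurable_funX.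
rewrite /T_coupling /distribution.
rewrite (ge0_integral_pushforward measurable_noisy_average_pair) //=; last first.
  by move=> z _; rewrite lee_fin sqr_ge0.
(* the shared noise cancels in the difference of the two coordinates *)
transitivity (\int[noise_prob A p]_w (((D w.1.1 + D w.1.2) / 2) ^+ 2)%:E)%E.
  rewrite preimage_setT; apply: eq_integral => w _.
  by rewrite /noisy_average /D /=; congr (EFin (_ ^+ 2)); field.
have mg : measurable_fun setT
    (fun x : (R * R) * (R * R) => (((D x.1 + D x.2) / 2) ^+ 2)%:E).
  apply/measurable_EFinP; apply: measurable_funX; apply: measurable_funM => //.
  by apply: measurable_funD; exact: measurableT_comp mD _.
rewrite /noise_prob (ge0_integral_prod_probability ((p \x p)%E : probability _ R)
  (gaussian A) mg); last by move=> x; rewrite lee_fin sqr_ge0.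
apply: integral_sqr_average => //.
- exact: integrable_coupling_diff.
- exact: integrable_coupling_cost.
- exact: coupling_diff_centered.
Qed.

End coupling_moments.

Lemma W2sq_Tmeas_le_half {R : realType} (A : R) (n m : probability R R) :
  0 < A ->
  n.-integrable setT (fun y : R => (y ^+ 2)%:E) ->
  m.-integrable setT (fun y : R => (y ^+ 2)%:E) ->
  (\int[n]_(y in setT) y%:E = \int[m]_(y in setT) y%:E)%E ->
  (2%:E * W2sq (Tmeas A n) (Tmeas A m) <= W2sq (n : set R -> \bar R) m)%E.
Proof.
move=> A0 n2 m2 n_m; apply: le_ereal_inf_tmp => _ [p p_nm <-].
have cost_fin := integrable_fin_num measurableT (integrable_coupling_cost p_nm n2 m2).
rewrite -(fineK cost_fin); set C := fine _.
have pC : (\int[p]_z ((z.1 - z.2) ^+ 2)%:E = C%:E)%E by rewrite fineK.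
have W2T : (W2sq (Tmeas A n) (Tmeas A m) <= (C / 2)%:E)%E.
  apply: ereal_inf_lbound; exists (T_coupling A p).
    exact: coupling_T_coupling A0 p_nm.
  exact: (T_coupling_cost p_nm n2 m2 n_m A pC).
have -> : C%:E = (2%:E * (C / 2)%:E)%E by rewrite -EFinM; congr EFin; field.
by rewrite lee_pmul2l.
Qed.

Lemma W2_le_of_W2sq {R : realType} (mu nu mu' nu' : set R -> \bar R) (k : R) :
  0 < k -> (k%:E * W2sq mu nu <= W2sq mu' nu')%E ->
  (W2 mu nu <= (Num.sqrt k)^-1%:E * W2 mu' nu')%E.
Proof.
move=> k0; have k0E : (0 < k%:E)%E by rewrite lte_fin.
have sk0E : (0 < (Num.sqrt k)^-1%:E)%E by rewrite lte_fin invr_gt0 sqrtr_gt0.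
rewrite /W2; case: (W2sq mu nu) => [x| |]; case: (W2sq mu' nu') => [y| |] //=.
- rewrite -EFinM !lee_fin => kxy.
  by rewrite ler_pdivlMl ?sqrtr_gt0 // -sqrtrM ?(ltW k0) //; exact: ler_wsqrtr.
all: by rewrite ?(gt0_muley k0E) ?(gt0_muley sk0E) ?(gt0_muleNy k0E)
  ?(gt0_muleNy sk0E) ?leey ?leNye ?leye_eq.
Qed.

Theorem theorem2 (R : realType) (A : R) (n m : probability R R) :
  0 < A ->
  n.-integrable setT (fun y : R => (y ^+ 2)%:E) ->
  m.-integrable setT (fun y : R => (y ^+ 2)%:E) ->
  (\int[n]_(y in setT) y%:E = \int[m]_(y in setT) y%:E)%E ->
  (W2 (Tmeas A n) (Tmeas A m) <= (Num.sqrt 2)^-1%:E * W2 (n : set R -> \bar R) (m : set R -> \bar R))%E.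
Proof.
move=> A0 n2 m2 n_m; apply: W2_le_of_W2sq; first by rewrite ltr0n.
exact: W2sq_Tmeas_le_half.
Qed.
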